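(* Let $H$ be a transitive subgroup of $\operatorname{Sym}_n$ and let $S=S_n(H)$. Then $\bigcup_{i=1}^n Sa_i^2S$ is not a prime ideal of $S$.
   Context: $S_n(H)$ is the monoid with presentation $\langle a_1,\dots,a_n \mid a_1\cdots a_n = a_{\sigma(1)}\cdots a_{\sigma(n)},\ \sigma\in H\rangle$. An ideal $Q$ of a monoid $S$ is prime if $Q\neq S$ and, for $u,v\in S$, $uSv\subseteq Q$ implies $u\in Q$ or $v\in Q$. *)

From mathcomp Require Import all_boot all_fingroup.
Set Implicit Arguments. Unset Strict Implicit. Unset Printing Implicit Defensive.

(* Elements of the free monoid on generators a_1..a_n are words : seq 'I_n;
   concatenation is the product.  S_n(H) is the quotient of the free monoid
   by the congruence [Scong H] generated by the defining relations
   a_1 ... a_n = a_{s(1)} ... a_{s(n)},  s in H. *)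

Definition id_word (n : nat) : seq 'I_n := enum 'I_n.
Definition perm_word (n : nat) (s : {perm 'I_n}) : seq 'I_n :=
  map s (enum 'I_n).

Inductive Scong (n : nat) (H : {set {perm 'I_n}}) : seq 'I_n -> seq 'I_n -> Prop :=
  | Scong_rel : forall (s : {perm 'I_n}) (x y : seq 'I_n), s \in H ->
      Scong H (x ++ id_word n ++ y) (x ++ perm_word s ++ y)
  | Scong_refl : forall u, Scong H u u
  | Scong_sym : forall u v, Scong H u v -> Scong H v u
  | Scong_trans : forall u v w, Scong H u v -> Scong H v w -> Scong H u w.

(* The ideal  \bigcup_i S a_i^2 S  of S_n(H), as a (congruence-saturated)
   predicate on words: w lies in it iff its class equals s a_i a_i t. *)
Definition sq_ideal (n : nat) (H : {set {perm 'I_n}}) (w : seq 'I_n) : Prop :=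
  exists (x y : seq 'I_n) (i : 'I_n), Scong H w (x ++ [:: i; i] ++ y).

Definition prime_ideal (n : nat) (H : {set {perm 'I_n}})
    (Q : seq 'I_n -> Prop) : Prop :=
  (forall u v, Scong H u v -> Q u -> Q v) /\
  (forall u x y, Q u -> Q (x ++ u ++ y)) /\
  (exists w, ~ Q w) /\
  (forall u v, (forall s, Q (u ++ s ++ v)) -> Q u \/ Q v).

From mathcomp Require Import all_boot all_fingroup.

(* The congruence preserves the property of being repetition-free ([uniq]),
   because both sides of every defining relation list each generator exactly
   once; so the class of a_1 ... a_n avoids the ideal.  Yet for any word s,
   the word a_1 ... a_n s a_1 ... a_n lies in it: if a_j is the last letter of
   a_1 ... a_n s, transitivity gives a relation turning the trailing
   a_1 ... a_n into a word starting with a_j. *)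

Lemma uniq_cat_total_nil {T : eqType} {x l y : seq T} :
  uniq (x ++ l ++ y) -> (forall a, a \in l) -> x = [::] /\ y = [::].
Proof.
move=> U l_total; split.
  case: x U => [//|a x]; rewrite cat_uniq => /andP[_ /andP[/hasPn Hx _]].
  by move: (Hx a); rewrite mem_cat l_total inE eqxx => /(_ isT).
case: y U => [//|a y].
rewrite !cat_uniq => /andP[_ /andP[_ /andP[_ /andP[/hasPn Hy _]]]].
by move: (Hy a); rewrite inE eqxx l_total => /(_ isT).
Qed.

Section SquareIdeal.

Variables (n : nat) (H : {set {perm 'I_n}}).

Lemma mem_id_word a : a \in id_word n.
Proof. by rewrite mem_enum. Qed.

Lemma mem_perm_word (s : {perm 'I_n}) a : a \in perm_word s.
Proof. by apply/mapP; exists (s^-1 a)%g; rewrite ?mem_enum ?permKV. Qed.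

Lemma id_word_uniq : uniq (id_word n).
Proof. exact: enum_uniq. Qed.

Lemma perm_word_uniq (s : {perm 'I_n}) : uniq (perm_word s).
Proof. by rewrite map_inj_uniq ?enum_uniq //; apply: perm_inj. Qed.

Lemma Scong_uniq u v : Scong H u v -> uniq u = uniq v.
Proof.
elim=> // [s x y _ | u0 v0 w0 _ -> _ ->] //.
apply/idP/idP => U.
  have [-> ->] := uniq_cat_total_nil U mem_id_word.
  by rewrite cats0 perm_word_uniq.
have [-> ->] := uniq_cat_total_nil U (mem_perm_word s).
by rewrite cats0 id_word_uniq.
Qed.

Lemma sq_ideal_not_uniq w : sq_ideal H w -> ~~ uniq w.
Proof.
case=> x [y [i /Scong_uniq ->]].
by rewrite !cat_uniq /= inE eqxx /= !andbF.
Qed.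

Lemma id_word_notin_sq_ideal : ~ sq_ideal H (id_word n).
Proof. by move/sq_ideal_not_uniq; rewrite id_word_uniq. Qed.

End SquareIdeal.

Lemma sq_ideal_rcons_id_word m (H : {group {perm 'I_m.+1}}) p j :
  [transitive H, on [set: 'I_m.+1] | 'P] ->
  sq_ideal H (rcons p j ++ id_word m.+1).
Proof.
move=> Htr; have [a aH a0j] := atransP2 Htr (in_setT ord0) (in_setT j).
have [t perm_wordE] : exists t, perm_word a = j :: t.
  by exists (behead (perm_word a)); rewrite /perm_word enum_ordSl /= a0j.
exists p, t, j.
have := Scong_rel (rcons p j) [::] aH.
by rewrite !cats0 perm_wordE -!cats1 -!catA.
Qed.

Lemma sq_ideal_id_word_sandwich m (H : {group {perm 'I_m.+1}}) s :
  [transitive H, on [set: 'I_m.+1] | 'P] ->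
  sq_ideal H (id_word m.+1 ++ s ++ id_word m.+1).
Proof.
move=> Htr; rewrite catA.
have : id_word m.+1 ++ s != [::] by rewrite /id_word enum_ordSl.
case/lastP: (id_word m.+1 ++ s) => [//|p j] _.
exact: sq_ideal_rcons_id_word.
Qed.

Theorem lemma4p4 (n : nat) (H : {group {perm 'I_n}}) :
  [transitive H, on [set: 'I_n] | 'P] ->
  ~ prime_ideal H (sq_ideal H).
Proof.
case: n H => [|m] H Htr [_ [_ [_ sq_prime]]].
  by move: Htr => /imsetP[[]].
have [] := sq_prime (id_word m.+1) (id_word m.+1).
- by move=> s; apply: sq_ideal_id_word_sandwich.
- exact: id_word_notin_sq_ideal.
- exact: id_word_notin_sq_ideal.
Qed.
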